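(* Let $R$ be a QNA with Goodearl–Yakimov elements $y_1,\ldots,y_N$. For all $i,j\in[1,N]$ with $i\neq j$, we have $y_i\notin y_jR$.
   Context: ${\mathbb K}$ is a field of characteristic $0$. A quantum nilpotent algebra (QNA) is an iterated Ore extension $R={\mathbb K}[x_1][x_2;\sigma_2,\delta_2]\cdots[x_N;\sigma_N,\delta_N]$, where $R_k={\mathbb K}[x_1][x_2;\sigma_2,\delta_2]\cdots[x_k;\sigma_k,\delta_k]$ ($R_0={\mathbb K}$), $\sigma_k$ is a ${\mathbb K}$-automorphism and $\delta_k$ a $\sigma_k$-derivation of $R_{k-1}$, together with a torus $\mathcal H$ acting rationally by ${\mathbb K}$-automorphisms on $R$ with each $x_i$ an $\mathcal H$-eigenvector, such that: (i) $\sigma_k(x_j)=\lambda_{kj}x_j$ for $j<k$, with $\lambda_{kj}\in{\mathbb K}^*$; (ii) $\delta_k$ is locally nilpotent on $R_{k-1}$; (iii) for each $k$ there exist $h_k\in\mathcal H$ and $q_k\in{\mathbb K}^*$ not a root of unity such that $h_k$ acts on $R_{k-1}$ as $\sigma_k$ and $h_k\cdot x_k=q_kx_k$. The rank is $n=|\{k:\delta_k=0\}|$ and $\mathcal H=({\mathbb K}^* )^n$ is taken maximal. Homogeneous elements are the $\mathcal H$-eigenvectors. An element $u$ is normal if $uR=Ru$; a prime element is a nonzero normal $p$ with $pR$ a completely prime ideal. Goodearl–Yakimov elements: there is a surjective map $\mu:[1,N]\to[1,n]$ with predecessor $p(k)=\max\{j<k:\mu(j)=\mu(k)\}$ (or $-\infty$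 if none) and successor $s(k)=\min\{j>k:\mu(j)=\mu(k)\}$ (or $+\infty$ if none), and homogeneous elements $y_1,\ldots,y_N\in R$, uniquely determined, with $y_k=x_k$ if $p(k)=-\infty$ and $y_k=y_{p(k)}x_k-c_k$ for some $c_k\in R_{k-1}$ otherwise, such that for every $k$ the set $\{y_j: j\le k,\ s(j)>k\}$ is, up to nonzero scalars, the set of homogeneous prime elements of $R_k$. The $y_i$ pairwise quasi-commute. *)

From HB Require Import structures.
From mathcomp Require Import all_boot all_order all_algebra.
Set Implicit Arguments. Unset Strict Implicit. Unset Printing Implicit Defensive.
Import Order.TTheory GRing.Theory Num.Theory.
Local Open Scope ring_scope.

(* Indices are 0-based: the generator x_k of the paper (k in [1,N]) is
   [x (k-1)] here, with [x : 'I_N -> R].  [Rsub k] is the paper's R_k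
   (subalgebra spanned by ordered monomials in the first k generators),
   so the paper's R_{k-1} for the generator [x k] (k : 'I_N) is [Rsub k]. *)

Section QNA.
Variables (K : fieldType) (R : algType K) (N : nat) (x : 'I_N -> R).

Definition mono (a : {ffun 'I_N -> nat}) : R := \prod_(i < N) x i ^+ a i.

Definition Rsub (k : nat) (r : R) : Prop :=
  exists s : seq (K * {ffun 'I_N -> nat}),
    (forall p, p \in s -> forall i : 'I_N, (k <= i)%N -> p.2 i = 0%N) /\
    r = \sum_(p <- s) p.1 *: mono p.2.

Definition pbw_basis : Prop :=
  (forall r, Rsub N r) /\
  (forall (s : seq {ffun 'I_N -> nat}) (c : {ffun 'I_N -> nat} -> K),
      uniq s -> \sum_(a <- s) c a *: mono a = 0 ->
      forall a, a \in s -> c a = 0).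

Definition alg_auto_on (S : R -> Prop) (f : R -> R) : Prop :=
  [/\ (forall r, S r -> S (f r)),
      (forall r, S r -> exists r', S r' /\ f r' = r),
      (forall r r', S r -> S r' -> f r = f r' -> r = r') &
      [/\ (forall (a : K) r r', S r -> S r' -> f (a *: r + r') = a *: f r + f r'),
          (forall r r', S r -> S r' -> f (r * r') = f r * f r') & f 1 = 1]].

Definition skew_der_on (S : R -> Prop) (f d : R -> R) : Prop :=
  [/\ (forall r, S r -> S (d r)),
      (forall (a : K) r r', S r -> S r' -> d (a *: r + r') = a *: d r + d r') &
      (forall r r', S r -> S r' -> d (r * r') = f r * d r' + d r * r')].

Definition iterated_ore (sigma delta : 'I_N -> R -> R) : Prop :=
  pbw_basis /\
  forall k : 'I_N,
    [/\ alg_auto_on (Rsub k) (sigma k),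
        skew_der_on (Rsub k) (sigma k) (delta k) &
        forall r, Rsub k r -> x k * r = sigma k r * x k + delta k r].

Section Torus.
Variables (n : nat) (act : ('I_n -> K) -> R -> R).

Definition inH (h : 'I_n -> K) : Prop := forall l, h l != 0.

Definition rchar (m : {ffun 'I_n -> int}) (h : 'I_n -> K) : K :=
  \prod_(l < n) h l ^ m l.

Definition eigenvector (u : R) : Prop :=
  u != 0 /\ forall h, inH h -> exists c : K, act h u = c *: u.

Definition rational_torus_action : Prop :=
  [/\ (forall h, inH h -> alg_auto_on (fun _ => True) (act h)),
      (forall r, act (fun _ => 1) r = r),
      (forall h h' r, inH h -> inH h' ->
          act (fun l => h l * h' l) r = act h (act h' r)) &
      (forall r, exists s : seq (R * {ffun 'I_n -> int}),
          r = \sum_(p <- s) p.1 /\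
          forall p, p \in s -> forall h, inH h -> act h p.1 = rchar p.2 h *: p.1)].

Definition not_root_of_unity (q : K) : Prop := forall m, (0 < m)%N -> q ^+ m != 1.

Definition rank_is (delta : 'I_N -> R -> R) : Prop :=
  exists D : {set 'I_N},
    (forall k, k \in D <-> forall r, Rsub k r -> delta k r = 0) /\ #|D| = n.

Definition is_QNA (sigma delta : 'I_N -> R -> R) : Prop :=
  [/\ iterated_ore sigma delta,
      rational_torus_action,
      (forall i, eigenvector (x i)),
      rank_is delta &
    [/\
      (forall k j : 'I_N, (j < k)%N ->
          exists lam : K, lam != 0 /\ sigma k (x j) = lam *: x j),
      (forall (k : 'I_N) r, Rsub k r -> exists m, iter m (delta k) r = 0) &
      (forall k : 'I_N, exists h, inH h /\
          (forall r, Rsub k r -> act h r = sigma k r) /\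
          exists q : K, q != 0 /\ not_root_of_unity q /\ act h (x k) = q *: x k)]].

Definition homogeneous (u : R) : Prop := eigenvector u.

Definition normal_in (S : R -> Prop) (u : R) : Prop :=
  forall r, S r ->
    (exists r', S r' /\ u * r = r' * u) /\ (exists r', S r' /\ r * u = u * r').

Definition in_rideal (S : R -> Prop) (u z : R) : Prop := exists r, S r /\ z = u * r.

Definition prime_in (S : R -> Prop) (u : R) : Prop :=
  [/\ S u, u != 0, normal_in S u, ~ in_rideal S u 1 &
      forall a b, S a -> S b -> in_rideal S u (a * b) ->
        in_rideal S u a \/ in_rideal S u b].

Definition is_pred (mu : 'I_N -> 'I_n) (k j : 'I_N) : Prop :=
  [/\ (j < k)%N, mu j = mu k &
      forall j' : 'I_N, (j < j')%N -> (j' < k)%N -> mu j' <> mu k].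

(* j <= k (1-based) and s(j) > k, for the paper's R_k = Rsub k *)
Definition alive (mu : 'I_N -> 'I_n) (k : nat) (j : 'I_N) : Prop :=
  (j < k)%N /\ forall j' : 'I_N, (j < j')%N -> (j' < k)%N -> mu j' <> mu j.

Definition GY_elements (mu : 'I_N -> 'I_n) (y : 'I_N -> R) : Prop :=
  [/\ (forall l : 'I_n, exists k, mu k = l),
      (forall k, homogeneous (y k)),
      (forall k : 'I_N, (forall j : 'I_N, (j < k)%N -> mu j <> mu k) -> y k = x k),
      (forall k j : 'I_N, is_pred mu k j ->
          exists c, Rsub k c /\ y k = y j * x k - c) &
      (forall k : nat, (1 <= k <= N)%N ->
         (forall j, alive mu k j -> prime_in (Rsub k) (y j)) /\
         (forall u, homogeneous u -> prime_in (Rsub k) u ->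
            exists j (c : K), [/\ alive mu k j, c != 0 & u = c *: y j]))].

End Torus.
End QNA.

From HB Require Import structures.
From mathcomp Require Import all_boot all_order all_algebra.
From Stdlib Require Import IndefiniteDescription.
Import GRing.Theory.
Local Open Scope ring_scope.
Set Implicit Arguments. Unset Strict Implicit. Unset Printing Implicit Defensive.

(** By the PBW basis, R_{k+1} is the skew polynomial ring R_k[x_k; sigma_k, delta_k]
    in which the x_k-degree over R_k is additive, because R_k is a domain and
    sigma_k is injective.  By induction every R_k is a domain, and a product of
    nonzero elements of R_{k+1} lies in R_k only if both factors do.  Each y_k
    has x_k-degree 1, so y_k is not in R_k.  If y_i = y_j r with i < j, then r
    lies in R_{j+1} and the degree in x_j forces y_j into R_j.  If j < i,
    complete primeness of y_i R_{i+1} puts y_j or r into y_i R_{i+1}: the first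
    is excluded by the degree in x_i, and in the second case normality of y_i
    and cancellation of y_i make y_j right invertible, contradicting the
    primeness of y_j. *)

Lemma big_ord_split_at (T : Type) (idx : T) (op : Monoid.law idx) n
    (F : 'I_n -> T) (k : 'I_n) :
  \big[op/idx]_(i < n) F i =
  op (op (\big[op/idx]_(i < n | (i < k)%N) F i) (F k))
     (\big[op/idx]_(i < n | (k < i)%N) F i).
Proof.
case: n F k => [|n] F k; first by case: k.
have E (P : pred nat) : \big[op/idx]_(i < n.+1 | P i) F i =
    \big[op/idx]_(0 <= i < n.+1 | P i) F (inord i).
  by rewrite big_mkord; apply: eq_bigr => i _; rewrite inord_val.
have kn : (k <= n.+1)%N by apply: ltnW.
rewrite (E xpredT) (E (fun i => i < k)%N) (E (fun i => k < i)%N).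
rewrite (big_cat_nat (leq0n k) kn) [X in op _ X]big_ltn //= inord_val Monoid.mulmA.
rewrite (big_nat_widen 0 k n.+1) //; congr (op (op _ _) _).
exact: big_nat_widenl.
Qed.

Section RsubSpan.
Variables (K : fieldType) (R : algType K) (N : nat) (x : 'I_N -> R).
Local Notation S := (Rsub x).

Lemma Rsub0 k : S k 0.
Proof. by exists [::]; split => //; rewrite big_nil. Qed.

Lemma RsubD k a b : S k a -> S k b -> S k (a + b).
Proof.
move=> [s1 [H1 ->]] [s2 [H2 ->]]; exists (s1 ++ s2); split; last by rewrite big_cat.
by move=> p; rewrite mem_cat => /orP[/H1|/H2].
Qed.

Lemma RsubZ k (c : K) a : S k a -> S k (c *: a).
Proof.
move=> [s [H ->]]; exists [seq (c * p.1, p.2) | p <- s]; split.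
  by move=> p /mapP[q /H Hq ->].
by rewrite big_map scaler_sumr; apply: eq_bigr => p _; rewrite scalerA.
Qed.

Lemma RsubN k a : S k a -> S k (- a).
Proof. by move=> Ha; rewrite -scaleN1r; apply: RsubZ. Qed.

Lemma RsubB k a b : S k a -> S k b -> S k (a - b).
Proof. by move=> Ha Hb; apply: RsubD => //; apply: RsubN. Qed.

Lemma Rsub_mono k (a : {ffun 'I_N -> nat}) :
  (forall i : 'I_N, (k <= i)%N -> a i = 0%N) -> S k (mono x a).
Proof.
move=> Ha; exists [:: (1, a)]; split; last by rewrite big_seq1 scale1r.
by move=> p; rewrite inE => /eqP ->.
Qed.

Lemma mono0 : mono x [ffun=> 0%N] = 1.
Proof. by rewrite /mono big1 // => i _; rewrite ffunE expr0. Qed.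

Lemma Rsub1 k : S k 1.
Proof. by rewrite -mono0; apply: Rsub_mono => i _; rewrite ffunE. Qed.

Lemma Rsub_le k k' a : (k <= k')%N -> S k a -> S k' a.
Proof.
move=> kk [s [H ->]]; exists s; split => // p ps i ki.
by apply: H => //; apply: leq_trans ki.
Qed.

Lemma Rsub0_scalar a : S 0 a -> exists c : K, a = c%:A.
Proof.
move=> [s [Hs ->]]; exists (\sum_(p <- s) p.1); rewrite scaler_suml big_seq [RHS]big_seq.
apply: eq_bigr => p ps; congr (_ *: _); rewrite /mono big1 // => i _.
by rewrite (Hs p ps i (leq0n _)) expr0.
Qed.

Definition set_exp (k : 'I_N) (e : nat) (a : {ffun 'I_N -> nat}) : {ffun 'I_N -> nat} :=
  [ffun i => if i == k then e else a i].

Lemma mono_set_exp (k : 'I_N) e (a : {ffun 'I_N -> nat}) :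
  (forall i : 'I_N, (k <= i)%N -> a i = 0%N) ->
  mono x (set_exp k e a) = mono x a * x k ^+ e.
Proof.
move=> Ha; have a_gt (i : 'I_N) : (k < i)%N -> a i = 0%N by move/ltnW; apply: Ha.
have set_lt (i : 'I_N) : (i < k)%N -> set_exp k e a i = a i.
  by rewrite ffunE; case: eqP => // ->; rewrite ltnn.
have set_gt (i : 'I_N) : (k < i)%N -> set_exp k e a i = 0%N.
  by rewrite ffunE; case: eqP => [->|_]; [rewrite ltnn | apply: a_gt].
rewrite /mono !(big_ord_split_at _ _ k) /= ffunE eqxx Ha // expr0 mulr1.
rewrite [X in _ * X = _]big1 => [|i ki]; last by rewrite set_gt.
rewrite [X in _ = _ * X * _]big1 => [|i ki]; last by rewrite a_gt.
by rewrite !mulr1; congr (_ * _); apply: eq_bigr => i ik; rewrite set_lt.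
Qed.

End RsubSpan.

Lemma sumZ_group (K : fieldType) (V : lmodType K) (A : eqType) (F : A -> V)
    (s : seq (K * A)) :
  \sum_(p <- s) p.1 *: F p.2 =
  \sum_(a <- undup (map snd s)) (\sum_(p <- s | p.2 == a) p.1) *: F a.
Proof.
have E a : (\sum_(p <- s | p.2 == a) p.1) *: F a =
    \sum_(p <- s) (if p.2 == a then p.1 *: F p.2 else 0).
  rewrite scaler_suml big_mkcond; apply: eq_bigr => p _.
  by case: eqP => [->|_]; rewrite ?scale0r.
under [RHS]eq_bigr => a _ do rewrite E.
rewrite exchange_big /= [LHS]big_seq [RHS]big_seq; apply: eq_bigr => p ps.
rewrite (bigD1_seq p.2) ?undup_uniq ?mem_undup ?map_f //= eqxx big1 ?addr0 // => a.
by rewrite eq_sym => /negbTE ->.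
Qed.

Section PBW.
Variables (K : fieldType) (R : algType K) (N : nat) (x : 'I_N -> R).
Hypothesis pbw : pbw_basis x.

Lemma pbw_coef_eq0 (s : seq (K * {ffun 'I_N -> nat})) :
  \sum_(p <- s) p.1 *: mono x p.2 = 0 ->
  forall a, \sum_(p <- s | p.2 == a) p.1 = 0.
Proof.
rewrite sumZ_group => s0 a.
have [as_|] := boolP (a \in undup (map snd s)).
  exact: (pbw.2 _ (fun a => \sum_(p <- s | p.2 == a) p.1) (undup_uniq _) s0).
rewrite mem_undup => /mapP a_s; rewrite big_seq_cond big_pred0 // => p.
by apply/negbTE/andP => -[ps /eqP pa]; apply: a_s; exists p.
Qed.

Lemma Rsub_powers_free (k : 'I_N) D (c : nat -> R) :
  (forall e, Rsub x k (c e)) -> \sum_(e < D) c e * x k ^+ e = 0 ->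
  forall e, (e < D)%N -> c e = 0.
Proof.
(* Shifting exponent k of the monomials representing each c e yields one
   combination of monomials; PBW independence then kills every coefficient. *)
move=> Sc.
have [s Hs] : {s : nat -> seq (K * {ffun 'I_N -> nat}) |
   forall e, (forall p, p \in s e -> forall i : 'I_N, (k <= i)%N -> p.2 i = 0%N) /\
     c e = \sum_(p <- s e) p.1 *: mono x p.2}.
  exists (fun e => proj1_sig (constructive_indefinite_description _ (Sc e))).
  by move=> e; case: (constructive_indefinite_description _ (Sc e)).
move=> c0 e eD.
pose L := flatten [seq [seq (p.1, set_exp k e' p.2) | p <- s e'] | e' <- iota 0 D].
have L0 : \sum_(q <- L) q.1 *: mono x q.2 = 0.
  rewrite -[RHS]c0 big_flatten big_map -(big_mkord xpredT (fun e => c e * x k ^+ e)).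
  rewrite /index_iota subn0; apply: eq_bigr => e' _; rewrite big_map (proj2 (Hs e')) mulr_suml.
  rewrite big_seq [RHS]big_seq; apply: eq_bigr => p ps /=.
  by rewrite mono_set_exp ?scalerAl // => i ki; apply: (proj1 (Hs e')).
have coef0 b : b \in map snd (s e) -> \sum_(p <- s e | p.2 == b) p.1 = 0.
  case/mapP => p0 p0s ->; have := pbw_coef_eq0 L0 (set_exp k e p0.2).
  rewrite big_flatten big_map (bigD1_seq e) ?iota_uniq ?mem_iota //=.
  rewrite [X in _ + X]big1 ?addr0; last first.
    move=> e' ne'; rewrite big_map big_pred0 // => p /=.
    apply/negbTE/eqP => /(congr1 (fun f : {ffun _ -> _} => f k)).
    by rewrite !ffunE eqxx => ee'; rewrite ee' eqxx in ne'.
  rewrite big_map => coef_set; rewrite -[RHS]coef_set big_seq_cond [RHS]big_seq_cond.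
  apply: eq_bigl => p /=; have [ps|] := boolP (p \in s e) => //=.
  apply/eqP/eqP => [->//|/ffunP eq_set]; apply/ffunP => i; move: (eq_set i).
  rewrite !ffunE.
  by case: eqP => [-> _|//]; rewrite (proj1 (Hs e) p ps) ?(proj1 (Hs e) p0 p0s).
rewrite (proj2 (Hs e)) sumZ_group big_seq big1 // => b.
by rewrite mem_undup => /coef0 ->; rewrite scale0r.
Qed.
End PBW.

Section OreStep.
Variables (K : fieldType) (R : algType K) (N : nat) (x : 'I_N -> R).
Variables (s d : R -> R) (k : 'I_N).
Local Notation S := (Rsub x k).
Local Notation X := (x k).

Definition xdeg_lt D (w : R) :=
  exists c : nat -> R, (forall e, S (c e)) /\ w = \sum_(e < D) c e * X ^+ e.

Definition xdeg_eq (w : R) D :=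
  exists lc w', [/\ S lc, lc != 0, xdeg_lt D w' & w = w' + lc * X ^+ D].

Lemma xdeg_lt0 D : xdeg_lt D 0.
Proof.
exists (fun _ => 0); split => [e|]; first exact: Rsub0.
by rewrite big1 // => e _; rewrite mul0r.
Qed.

Lemma xdeg_ltD D a b : xdeg_lt D a -> xdeg_lt D b -> xdeg_lt D (a + b).
Proof.
move=> [ca [Sca ->]] [cb [Scb ->]]; exists (fun e => ca e + cb e); split.
  by move=> e; apply: RsubD.
by rewrite -big_split; apply: eq_bigr => e _; rewrite mulrDl.
Qed.

Lemma xdeg_lt_sum D D' (F : 'I_D -> R) :
  (forall e, xdeg_lt D' (F e)) -> xdeg_lt D' (\sum_(e < D) F e).
Proof. by move=> HF; apply: (big_ind (xdeg_lt D')) => //; [apply: xdeg_lt0 | apply: xdeg_ltD]. Qed.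

Lemma xdeg_lt_term D c e : S c -> (e < D)%N -> xdeg_lt D (c * X ^+ e).
Proof.
move=> Sc eD; exists (fun i => if i == e then c else 0); split.
  by move=> i; case: eqP => _ //; apply: Rsub0.
rewrite (bigD1 (Ordinal eD)) //= eqxx big1 ?addr0 // => i.
by rewrite -val_eqE /= => /negbTE ->; rewrite mul0r.
Qed.

Lemma xdeg_lt_le D D' a : (D <= D')%N -> xdeg_lt D a -> xdeg_lt D' a.
Proof.
move=> DD' [c [Sc ->]]; apply: xdeg_lt_sum => e; apply: xdeg_lt_term => //.
exact: leq_trans (ltn_ord e) DD'.
Qed.

Lemma xdeg_lt1 a : S a -> xdeg_lt 1 a.
Proof. by move=> Sa; rewrite -[a]mulr1 -(expr0 X); apply: xdeg_lt_term. Qed.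

Lemma xdeg_lt0_eq0 a : xdeg_lt 0 a -> a = 0.
Proof. by move=> [c [_ ->]]; rewrite big_ord0. Qed.

Lemma Rsub_succ_term c e : S c -> Rsub x k.+1 (c * X ^+ e).
Proof.
move=> [sc [Hsc ->]]; rewrite mulr_suml big_seq.
apply: (big_ind (Rsub x k.+1)); [exact: Rsub0 | exact: RsubD |] => p ps.
rewrite -scalerAl -mono_set_exp; last exact: Hsc.
apply/RsubZ/Rsub_mono => i ki; rewrite ffunE.
case: eqP => [ik|_]; first by move: ki; rewrite ik ltnn.
exact/Hsc/ltnW.
Qed.

Lemma xdeg_lt_Rsub_succ D u : xdeg_lt D u -> Rsub x k.+1 u.
Proof.
move=> [c [Sc ->]]; apply: (big_ind (Rsub x k.+1)); [exact: Rsub0 | exact: RsubD |].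
by move=> e _; apply: Rsub_succ_term.
Qed.

Lemma Rsub_succ_xdeg_lt u : Rsub x k.+1 u -> exists D, xdeg_lt D u.
Proof.
move=> [sq [Hsq ->]]; elim: sq Hsq => [|p sq IH] Hsq.
  by exists 0%N; rewrite big_nil; apply: xdeg_lt0.
have [D HD] : exists D, xdeg_lt D (\sum_(q <- sq) q.1 *: mono x q.2).
  by apply: IH => q qs; apply: Hsq; rewrite inE qs orbT.
have Hp (i : 'I_N) : (k <= i)%N -> i != k -> p.2 i = 0%N.
  move=> ki ik; apply: (Hsq p (mem_head _ _)).
  by rewrite ltn_neqAle ki andbT; apply: contra ik => /eqP ik; apply/eqP/val_inj.
exists (maxn D (p.2 k).+1); rewrite big_cons addrC; apply: xdeg_ltD.
  by apply: xdeg_lt_le HD; apply: leq_maxl.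
have -> : mono x p.2 = mono x (set_exp k 0 p.2) * X ^+ (p.2 k).
  rewrite -mono_set_exp => [|i ki]; last by rewrite ffunE; case: eqP => // /eqP/(Hp _ ki).
  by congr (mono x _); apply/ffunP => i; rewrite !ffunE; case: eqP => // ->.
rewrite scalerAl; apply: xdeg_lt_term; last by rewrite leq_max ltnSn orbT.
apply/RsubZ/Rsub_mono => i ki; rewrite ffunE; case: eqP => // /eqP.
exact: Hp.
Qed.

Hypothesis pbw : pbw_basis x.

Lemma xdeg_eq_lt u D : xdeg_eq u D -> ~ xdeg_lt D u.
Proof.
move=> [lc [u' [Slc nlc [c' [Sc' ->]] ->]]] [c [Sc Ec]].
pose c'' e := if (e < D)%N then c e - c' e else - lc.
have Sc'' e : S (c'' e) by rewrite /c''; case: ifP => _; [apply: RsubB | apply: RsubN].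
have : \sum_(e < D.+1) c'' e * X ^+ e = 0.
  rewrite big_ord_recr /= /c'' ltnn.
  under eq_bigr => i _ do rewrite ltn_ord mulrBl.
  by rewrite sumrB -Ec mulNr addrAC addrK subrr.
move/(Rsub_powers_free pbw Sc'')/(_ D (ltnSn D)); rewrite /c'' ltnn.
by move/eqP; rewrite oppr_eq0 (negbTE nlc).
Qed.

Lemma xdeg_eq_exists D u : xdeg_lt D u -> u != 0 -> exists e, xdeg_eq u e.
Proof.
elim: D u => [|D IH] u Hu nu; first by move: nu; rewrite (xdeg_lt0_eq0 Hu) eqxx.
move: Hu => [c [Sc]]; rewrite big_ord_recr /= => Eu.
have [cD0|nzcD] := eqVneq (c D) 0.
  by apply: IH nu; exists c; split => //; rewrite Eu cD0 mul0r addr0.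
by exists D, (c D), (\sum_(i < D) c i * X ^+ i); split => //; exists c.
Qed.

Lemma xdeg_eq0 u : xdeg_eq u 0 -> S u.
Proof. by move=> [lc [u' [Slc _ /xdeg_lt0_eq0 -> ->]]]; rewrite add0r expr0 mulr1. Qed.

Hypothesis RsubM : forall a b, S a -> S b -> S (a * b).
Hypothesis Rsub_mul_eq0 : forall a b, S a -> S b -> a * b = 0 -> a = 0 \/ b = 0.
Hypothesis s_auto : alg_auto_on S s.
Hypothesis d_der : skew_der_on S s d.
Hypothesis ore : forall r, S r -> X * r = s r * X + d r.
Lemma xdeg_lt_mull D u w : S u -> xdeg_lt D w -> xdeg_lt D (u * w).
Proof.
move=> Su [c [Sc ->]]; rewrite mulr_sumr; apply: xdeg_lt_sum => e.
by rewrite mulrA; apply: xdeg_lt_term => //; apply: RsubM.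
Qed.

Lemma xdeg_lt_mulXnr D f w : xdeg_lt D w -> xdeg_lt (D + f) (w * X ^+ f).
Proof.
move=> [c [Sc ->]]; rewrite mulr_suml; apply: xdeg_lt_sum => e.
by rewrite -mulrA -exprD; apply: xdeg_lt_term => //; rewrite ltn_add2r.
Qed.

Lemma xdeg_lt_mulXl D w : xdeg_lt D w -> xdeg_lt D.+1 (X * w).
Proof.
have [Ss _ _ _] := s_auto; have [Sd _ _] := d_der.
move=> [c [Sc ->]]; rewrite mulr_sumr; apply: xdeg_lt_sum => e.
rewrite mulrA ore // mulrDl; apply: xdeg_ltD.
  by rewrite -mulrA -exprS; apply: xdeg_lt_term; [apply: Ss | rewrite ltnS].
by apply: xdeg_lt_term; [apply: Sd | rewrite ltnS ltnW].
Qed.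

Lemma xdeg_lt_mulXnl D e w : xdeg_lt D w -> xdeg_lt (D + e) (X ^+ e * w).
Proof.
move=> Hw; elim: e => [|e IH]; first by rewrite addn0 expr0 mul1r.
by rewrite exprS -mulrA addnS; apply: xdeg_lt_mulXl.
Qed.

Lemma xdeg_lt_mul p q a b : xdeg_lt p a -> xdeg_lt q.+1 b -> xdeg_lt (p + q) (a * b).
Proof.
move=> [c [Sc ->]] Hb; rewrite mulr_suml; apply: xdeg_lt_sum => e.
rewrite -mulrA; apply: xdeg_lt_mull => //; apply: xdeg_lt_le (xdeg_lt_mulXnl e Hb).
by rewrite addSn addnC -addSn leq_add2r.
Qed.

Lemma iter_s_Rsub e b : S b -> S (iter e s b).
Proof. by have [Ss _ _ _] := s_auto; move=> Sb; elim: e => //= e IH; apply: Ss. Qed.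

Lemma iter_s_neq0 e b : S b -> b != 0 -> iter e s b != 0.
Proof.
have [_ _ s_inj [s_lin _ _]] := s_auto.
have s0 : s 0 = 0.
  have := s_lin 1 0 0 (Rsub0 _ _) (Rsub0 _ _); rewrite !scale1r !addr0 => E.
  by apply: (addrI (s 0)); rewrite -E addr0.
move=> Sb nb; elim: e => //= e; apply: contra => /eqP E.
by apply/eqP/s_inj; rewrite ?E ?s0 //; [apply: iter_s_Rsub | apply: Rsub0].
Qed.

Lemma Xn_mul D b : S b ->
  exists w, xdeg_lt D w /\ X ^+ D * b = iter D s b * X ^+ D + w.
Proof.
have [Sd _ _] := d_der.
move=> Sb; elim: D => [|D [w [Hw E]]].
  by exists 0; split; [apply: xdeg_lt0 | rewrite !expr0 mulr1 mul1r addr0].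
exists (d (iter D s b) * X ^+ D + X * w); split.
  apply: xdeg_ltD; last exact: xdeg_lt_mulXl.
  by apply: xdeg_lt_term; [apply: Sd; apply: iter_s_Rsub | rewrite ltnS].
rewrite exprS -mulrA E mulrDr mulrA ore; last exact: iter_s_Rsub.
by rewrite mulrDl -mulrA -exprS addrA.
Qed.



Lemma xdeg_eq_mul a b p q : xdeg_eq a p -> xdeg_eq b q -> xdeg_eq (a * b) (p + q).
Proof.
move=> [la [a' [Sla nla Ha' ->]]] [lb [b' [Slb nlb Hb' ->]]].
have [w [Hw Ew]] := Xn_mul p Slb.
exists (la * iter p s lb),
  (a' * b' + a' * (lb * X ^+ q) + la * (X ^+ p * b') + la * w * X ^+ q); split.
- by apply: RsubM => //; apply: iter_s_Rsub.
- apply/eqP => /Rsub_mul_eq0 [] //; first exact: iter_s_Rsub.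
    by move/eqP: nla.
  by move/eqP: (iter_s_neq0 p Slb nlb).
- apply: xdeg_ltD; last by apply: xdeg_lt_mulXnr; apply: xdeg_lt_mull.
  apply: xdeg_ltD; last by rewrite addnC; apply: xdeg_lt_mull => //; apply: xdeg_lt_mulXnl.
  apply: xdeg_ltD; first by apply: xdeg_lt_mul Ha' (xdeg_lt_le _ Hb').
  by apply: xdeg_lt_mul Ha' (xdeg_lt_term _ _).
- rewrite mulrDl !mulrDr -!addrA; congr (_ + (_ + _)).
  rewrite -mulrA; congr (_ + _).
  by rewrite -!mulrA (mulrA (X ^+ p)) Ew mulrDl mulrDr addrC exprD !mulrA.
Qed.


Lemma Rsub_succM a b : Rsub x k.+1 a -> Rsub x k.+1 b -> Rsub x k.+1 (a * b).
Proof.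
move=> /Rsub_succ_xdeg_lt [p Ha] /Rsub_succ_xdeg_lt [q Hb].
exact: (xdeg_lt_Rsub_succ (xdeg_lt_mul Ha (xdeg_lt_le _ Hb))).
Qed.

Lemma Rsub_succ_xdeg_eq u : Rsub x k.+1 u -> u != 0 -> exists e, xdeg_eq u e.
Proof. by move=> /Rsub_succ_xdeg_lt [D HD]; apply: xdeg_eq_exists HD. Qed.

Lemma Rsub_succ_mul_eq0 a b : Rsub x k.+1 a -> Rsub x k.+1 b ->
  a * b = 0 -> a = 0 \/ b = 0.
Proof.
move=> Sa Sb ab0; have [->|na] := eqVneq a 0; first by left.
have [->|nb] := eqVneq b 0; first by right.
have [p Hp] := Rsub_succ_xdeg_eq Sa na; have [q Hq] := Rsub_succ_xdeg_eq Sb nb.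
by case: (xdeg_eq_lt (xdeg_eq_mul Hp Hq)); rewrite ab0; apply: xdeg_lt0.
Qed.

Lemma Rsub_succ_mul_factors a b : Rsub x k.+1 a -> Rsub x k.+1 b -> a != 0 -> b != 0 ->
  S (a * b) -> S a /\ S b.
Proof.
move=> Sa Sb na nb Sab.
have [[|p] Hp] := Rsub_succ_xdeg_eq Sa na; have [[|q] Hq] := Rsub_succ_xdeg_eq Sb nb.
- by split; apply: xdeg_eq0.
all: case: (xdeg_eq_lt (xdeg_eq_mul Hp Hq)).
all: by apply: xdeg_lt_le (xdeg_lt1 Sab); rewrite ?addn0 ?addnS.
Qed.
End OreStep.

Section IteratedOre.
Variables (K : fieldType) (R : algType K) (N : nat) (x : 'I_N -> R).
Variables (sigma delta : 'I_N -> R -> R).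
Hypothesis ore : iterated_ore x sigma delta.
Local Notation S := (Rsub x).

Lemma Rsub_mul_domain j : (j <= N)%N ->
  (forall a b, S j a -> S j b -> S j (a * b)) /\
  (forall a b, S j a -> S j b -> a * b = 0 -> a = 0 \/ b = 0).
Proof.
elim: j => [_|j IH jN].
  split=> a b /Rsub0_scalar [c ->] /Rsub0_scalar [c' ->].
    by rewrite -scalerAl mul1r scalerA; apply/RsubZ/Rsub1.
  rewrite -scalerAl mul1r scalerA => /eqP; rewrite scaler_eq0 oner_eq0 orbF mulf_eq0.
  by case/orP => /eqP ->; [left | right]; rewrite scale0r.
pose k := Ordinal jN; have [SM Sdom] := IH (ltnW jN); have [pbw /(_ k) [Ss Sd Sore]] := ore.
split; first exact: (Rsub_succM (k := k) SM Ss Sd Sore).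
exact: (Rsub_succ_mul_eq0 (k := k) pbw SM Sdom Ss Sd Sore).
Qed.

Lemma Rsub_mul_factors (k : 'I_N) a b :
  S k.+1 a -> S k.+1 b -> a != 0 -> b != 0 -> S k (a * b) -> S k a /\ S k b.
Proof.
have [SM Sdom] := Rsub_mul_domain (ltnW (ltn_ord k)).
have [pbw /(_ k) [Ss Sd Sore]] := ore.
exact: (Rsub_succ_mul_factors (k := k) pbw SM Sdom Ss Sd Sore).
Qed.

Lemma Rsub_cancell m a r : (m <= N)%N -> S m a -> a != 0 -> S m (a * r) -> S m r.
Proof.
move=> mN Sa na Sar; have [->|nr] := eqVneq r 0; first exact: Rsub0.
suff downward t : (m + t <= N)%N -> S (m + t) r -> S m r.
  by apply: (downward (N - m)%N); rewrite subnKC //; apply: (ore.1).1.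
elim: t => [|t IH] mt; first by rewrite addn0.
have mtN : (m + t < N)%N by rewrite -addnS.
move=> St; apply: IH (ltnW mtN) _; rewrite addnS in St.
have [] // := Rsub_mul_factors (k := Ordinal mtN) (Rsub_le (leqW (leq_addr t m)) Sa) St na nr.
exact: Rsub_le (leq_addr t m) Sar.
Qed.

End IteratedOre.

Section GYDivisibility.
Variables (K : fieldType) (R : algType K) (N : nat) (x : 'I_N -> R).
Variables (sigma delta : 'I_N -> R -> R) (y : 'I_N -> R).
Hypothesis ore : iterated_ore x sigma delta.
Hypothesis y_prime : forall k : 'I_N, prime_in (Rsub x k.+1) (y k).
Hypothesis y_notin : forall k : 'I_N, ~ Rsub x k (y k).
Local Notation S := (Rsub x).

Lemma y_neq0 k : y k != 0.
Proof. by have [] := y_prime k. Qed.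

Lemma y_cancell (k : 'I_N) m r : (k < m <= N)%N -> S m (y k * r) -> S m r.
Proof.
case/andP=> km mN; have [Sy _ _ _ _] := y_prime k.
exact: Rsub_cancell ore _ _ _ mN (Rsub_le km Sy) (y_neq0 k).
Qed.

Lemma y_mul_neq1 k t : y k * t != 1.
Proof.
apply/eqP => yt1; have [_ _ _ not_unit _] := y_prime k; apply: not_unit.
exists t; split=> //; apply: (y_cancell (k := k)); first by rewrite ltnSn ltn_ord.
by rewrite yt1; apply: Rsub1.
Qed.

Lemma y_not_dvd_lt (i j : 'I_N) : (i < j)%N -> ~ exists r, y i = y j * r.
Proof.
move=> ij [r yi]; have [Syi _ _ _ _] := y_prime i; have [Syj _ _ _ _] := y_prime j.
have Sr : S j.+1 r.
  apply: (y_cancell (k := j)); first by rewrite ltnSn ltn_ord.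
  by rewrite -yi; apply: Rsub_le Syi; rewrite ltnS ltnW.
have nr : r != 0 by apply: contraNneq (y_neq0 i) => r0; rewrite yi r0 mulr0.
have [] := Rsub_mul_factors ore Syj Sr (y_neq0 j) nr.
  by rewrite -yi; apply: Rsub_le Syi.
by move/y_notin.
Qed.

Lemma y_not_dvd_gt (i j : 'I_N) : (j < i)%N -> ~ exists r, y i = y j * r.
Proof.
move=> ji [r yi]; have [Syi _ Nyi _ Pyi] := y_prime i; have [Syj _ _ _ _] := y_prime j.
have Syj' : S i.+1 (y j) by apply: Rsub_le Syj; apply: ltnW.
have Sr : S i.+1 r.
  apply: (y_cancell (k := j)); last by rewrite -yi.
  by rewrite ltnS (ltnW ji) ltn_ord.
have [] := Pyi _ _ Syj' Sr; first by exists 1; rewrite mulr1 -yi; split=> //; apply: Rsub1.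
- move=> [t [St yj]].
  have nt : t != 0 by apply: contraNneq (y_neq0 j) => t0; rewrite yj t0 mulr0.
  have [] := Rsub_mul_factors ore Syi St (y_neq0 i) nt.
    by rewrite -yj; apply: Rsub_le Syj.
  by move/y_notin.
- move=> [t [St rt]]; have [[t' [St' yt]] _] := Nyi t St.
  have [SM Sdom] := Rsub_mul_domain ore (ltn_ord i).
  have : (1 - y j * t') * y i = 0 by rewrite mulrBl mul1r -mulrA -yt -rt -yi subrr.
  have S1yt : S i.+1 (1 - y j * t') by apply: RsubB (Rsub1 _ _) (SM _ _ Syj' St').
  case/(Sdom _ _ S1yt Syi) => /eqP; last by rewrite (negbTE (y_neq0 i)).
  by rewrite subr_eq0 eq_sym (negbTE (y_mul_neq1 j t')).
Qed.

End GYDivisibility.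

Lemma exists_is_pred (N n : nat) (mu : 'I_N -> 'I_n) (k j : 'I_N) :
  (j < k)%N -> mu j = mu k -> exists p, is_pred mu k p.
Proof.
move=> jk mujk; have Pj : (j < k)%N && (mu j == mu k) by rewrite jk mujk eqxx.
case: (@arg_maxnP _ j (fun j : 'I_N => (j < k)%N && (mu j == mu k)) id Pj).
move=> p /andP[pk /eqP mup] p_max; exists p; split=> // j' pj' j'k muj'.
by have := p_max j'; rewrite j'k muj' eqxx => /(_ isT) /=; rewrite leqNgt pj'.
Qed.

Section GYElements.
Variables (K : fieldType) (R : algType K) (N : nat) (x : 'I_N -> R).
Variables (n : nat) (act : ('I_n -> K) -> R -> R).
Variables (mu : 'I_N -> 'I_n) (y : 'I_N -> R).
Hypothesis pbw : pbw_basis x.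
Hypothesis GY : GY_elements x act mu y.

Lemma GY_prime (k : 'I_N) : prime_in (Rsub x k.+1) (y k).
Proof.
have [_ _ _ _ /(_ k.+1)] := GY; rewrite ltn_ord => /(_ isT) [prime_alive _].
apply: prime_alive; split=> // j' kj'.
by rewrite ltnS leqNgt kj'.
Qed.

Lemma GY_xdeg_eq1 (k : 'I_N) : xdeg_eq x k (y k) 1.
Proof.
have [_ _ y_first y_next _] := GY.
case: (boolP [exists j : 'I_N, (j < k)%N && (mu j == mu k)]).
  case/existsP=> j /andP[jk /eqP mujk]; have [p pred_p] := exists_is_pred jk mujk.
  have [pk _ _] := pred_p; have [c [Sc ->]] := y_next k p pred_p.
  have [Syp nyp _ _ _] := GY_prime p.
  exists (y p), (- c); split=> //; first exact: Rsub_le pk Syp.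
    exact/xdeg_lt1/RsubN.
  by rewrite expr1 addrC.
rewrite negb_exists => /forallP no_pred; rewrite y_first => [|j jk mujk]; last first.
  by have := no_pred j; rewrite jk mujk eqxx.
exists 1, 0; split; [exact: Rsub1 | exact: oner_neq0 | exact: xdeg_lt0 |].
by rewrite add0r mul1r expr1.
Qed.

Lemma GY_notin_Rsub (k : 'I_N) : ~ Rsub x k (y k).
Proof. by move/xdeg_lt1; apply: (xdeg_eq_lt pbw (GY_xdeg_eq1 k)). Qed.

End GYElements.

Theorem lemma3p4 (K : fieldType) (R : algType K) (N : nat) (x : 'I_N -> R)
    (sigma delta : 'I_N -> R -> R) (n : nat) (act : ('I_n -> K) -> R -> R)
    (mu : 'I_N -> 'I_n) (y : 'I_N -> R) :
  [pchar K] =i pred0 ->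
  is_QNA x act sigma delta ->
  GY_elements x act mu y ->
  forall i j : 'I_N, i != j -> ~ (exists r : R, y i = y j * r).
Proof.
move=> _ [ore _ _ _ _] GY i j; have [pbw _] := ore.
have y_notin := GY_notin_Rsub pbw GY.
rewrite neq_ltn => /orP[].
  exact: (y_not_dvd_lt ore (GY_prime GY) y_notin).
exact: (y_not_dvd_gt ore (GY_prime GY) y_notin).
Qed.
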